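(* Let $m\in\mathbb{Z}_{>0}$, $|X|=m$, $S=\{-1/2,1/2\}^X$, $B=\{-1,1\}^X$, and let $\ell(y,u)=(y-u)^2$ for $y\in\{-1,1\}$, $u\in[-1,1]$. Then for every $\varepsilon,\delta\ge0$, $\#\mathsf{CompR}(S,B,\ell,\varepsilon,\delta)=0$. However, for the uniform distribution $\mu_X$ over $X$, for any $\varepsilon\in(0,3/4)$ and $\delta\in(0,1/2)$, $\#\mathsf{CompR}^{\mu_X}(B,S,\ell,\varepsilon,\delta)\ge\big(1-\sqrt{1/4+\varepsilon}\big)m$.
   Context: Comparative regression $\mathsf{CompR}_n(S,B,\ell,\varepsilon,\delta)$ (for $S\subseteq([-1,1]\cup\{*\})^X$, total $B\subseteq[-1,1]^X$): (possibly randomized) learners taking $n$ points of $X\times\{-1,1\}$ and outputting $f:X\to[-1,1]$ such that for every distribution $\mu$ on $X\times\{-1,1\}$ for which some $s\in S$ has $\Pr_{x\sim\mu|_X}[s(x)\ne*]=1$ and $\mathbb{E}_\mu[y|x]=s(x)$, with probability $\ge1-\delta$ over $n$ i.i.d. samples, $\mathbb{E}_\mu[\ell(y,f(x))]\le\inf_{b\in B}\mathbb{E}_\mu[\ell(y,b(x))]+\varepsilon$. The distribution-specific version $\mathsf{CompR}^{\mu_X}_n$ requires the guarantee only for $\mu$ with $\mu|_X=\mu_X$. $\#$ denotes the least such $n$. *)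

From HB Require Import structures.
From mathcomp Require Import all_boot all_order all_algebra.
From mathcomp Require Import all_classical all_reals all_analysis.
Set Implicit Arguments. Unset Strict Implicit. Unset Printing Implicit Defensive.
Import Order.TTheory GRing.Theory Num.Theory.
Local Open Scope classical_set_scope.
Local Open Scope ring_scope.

Section CompRDefs.
Context {R : realType} {X : finType}.

(* labels y in {-1,1} are encoded by booleans *)
Definition lab (b : bool) : R := if b then 1 else -1.

Definition is_distr (T : finType) (p : T -> R) : Prop :=
  (forall t, 0 <= p t) /\ \sum_(t : T) p t = 1.

Definition marg (mu : X * bool -> R) (x : X) : R := mu (x, true) + mu (x, false).

(* conditional expectation E_mu[y | x] (meaningful when marg mu x > 0) *)
Definition cond_exp (mu : X * bool -> R) (x : X) : R :=
  (\sum_(b : bool) mu (x, b) * lab b) / marg mu x.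

Definition exp_loss (loss : R -> R -> R) (mu : X * bool -> R) (f : X -> R) : R :=
  \sum_(z : X * bool) mu z * loss (lab z.2) (f z.1).

(* realizability by a partial concept class S (None = "*") :
   some s in S is defined mu_X-a.s. and E[y|x] = s(x) mu_X-a.s. *)
Definition realizable (S : set (X -> option R)) (mu : X * bool -> R) : Prop :=
  exists2 s, S s & forall x, 0 < marg mu x ->
    exists v, s x = Some v /\ cond_exp mu x = v.

(* a possibly randomized learner using n samples: randomness from an
   arbitrary probability space, output f : X -> [-1,1] *)
Record rlearner (n : nat) := RLearner {
  rl_disp : measure_display;
  rl_Omega : measurableType rl_disp;
  rl_P : probability rl_Omega R;
  rl_map : n.-tuple (X * bool) -> rl_Omega -> X -> R;
  rl_meas : forall s x, measurable_fun setT (fun w => rl_map s w x);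
  rl_range : forall s w x, -1 <= rl_map s w x <= 1 }.

Definition succ_prob n (A : rlearner n) (mu : X * bool -> R)
    (good : (X -> R) -> Prop) : R :=
  \sum_(s : n.-tuple (X * bool))
     (\prod_(i < n) mu (tnth s i)) *
     fine (rl_P A [set w | good (@rl_map n A s w)]).

Definition comp_good (B : set (X -> R)) (loss : R -> R -> R) (eps : R)
   (mu : X * bool -> R) (f : X -> R) : Prop :=
  exp_loss loss mu f <= inf [set exp_loss loss mu b | b in B] + eps.

Definition CompR n (S : set (X -> option R)) (B : set (X -> R))
    (loss : R -> R -> R) (eps delta : R) (A : rlearner n) : Prop :=
  forall mu : X * bool -> R, is_distr mu -> realizable S mu ->
    1 - delta <= succ_prob A mu (comp_good B loss eps mu).

Definition CompR_at (muX : X -> R) n (S : set (X -> option R)) (B : set (X -> R))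
    (loss : R -> R -> R) (eps delta : R) (A : rlearner n) : Prop :=
  forall mu : X * bool -> R, is_distr mu -> (forall x, marg mu x = muX x) ->
    realizable S mu ->
    1 - delta <= succ_prob A mu (comp_good B loss eps mu).

Definition S_half_partial : set (X -> option R) :=
  [set s | forall x, s x = Some (1/2) \/ s x = Some (- (1/2))].
Definition S_half_total : set (X -> R) :=
  [set s | forall x, s x = 1/2 \/ s x = - (1/2)].
Definition B_sign_partial : set (X -> option R) :=
  [set s | forall x, s x = Some 1 \/ s x = Some (-1)].
Definition B_sign_total : set (X -> R) :=
  [set s | forall x, s x = 1 \/ s x = -1].

Definition sq_loss (y u : R) : R := (y - u) ^+ 2.

End CompRDefs.

From HB Require Import structures.
From mathcomp Require Import all_boot all_order all_algebra.
From mathcomp Require Import all_classical all_reals all_analysis.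
From mathcomp Require Import measurable_realfun ring lra.
Import Order.TTheory GRing.Theory Num.Theory.
Local Open Scope classical_set_scope.
Local Open Scope ring_scope.

(* If E[y|x] = +-1/2, a prediction u with |u| >= 1 has conditional squared loss
   1 + u^2 - 2 u E[y|x] >= 1, the loss of predicting 0; so the learner that
   ignores its sample and outputs 0 competes with every sign predictor.

   For the lower bound take the uniform marginal and deterministic labels
   y = t x, realizable by the signs; the best predictor t/2 of S has risk 1/4,
   so success forces sum_x (t x - f x)^2 <= (1/4 + eps) m.  Flipping t on the
   points missing from the sample does not change the law of the sample but
   forces the two squared errors to add up to 2 on each missing point.  With
   fewer than (3/4 - eps) m samples, f cannot succeed for both labelings, so on
   average over t the success probability is at most 1/2 < 1 - delta.  Finally
   1/4 + eps <= sqrt (1/4 + eps) as 1/4 + eps <= 1. *)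

Lemma sum_tuple_prod (R : comPzSemiRingType) (T : finType) n (p : T -> R) :
  \sum_(s : n.-tuple T) \prod_(i < n) p (tnth s i) = (\sum_t p t) ^+ n.
Proof.
rewrite -[in RHS](card_ord n) -prodr_const bigA_distr_bigA /=.
rewrite (reindex (fun f : {ffun 'I_n -> T} => [tuple f i | i < n])) /=.
  by apply: eq_bigr => f _; apply: eq_bigr => i _; rewrite tnth_mktuple.
exists (fun s : n.-tuple T => [ffun i => tnth s i]) => [f _|s _].
  by apply/ffunP => i; rewrite ffunE tnth_mktuple.
by apply: eq_from_tnth => i; rewrite tnth_mktuple ffunE.
Qed.

Lemma le_sqrtr_id (R : rcfType) (x : R) : 0 <= x <= 1 -> x <= Num.sqrt x.
Proof.
case/andP=> x_ge0 x_le1.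
have sx_le1 : Num.sqrt x <= 1 by rewrite -sqrtr1 ler_wsqrtr.
by rewrite -{1}(sqr_sqrtr x_ge0) expr2 ler_piMl ?sqrtr_ge0.
Qed.

Lemma fine_probabilityU_le1 (R : realType) d (T : measurableType d)
    (P : probability T R) (A B : set T) :
  measurable A -> measurable B -> A `&` B = set0 -> fine (P A) + fine (P B) <= 1.
Proof.
move=> mA mB AB0; have := probability_le1 P (measurableU _ _ mA mB).
by rewrite measureU // -lee_fin EFinD !fineK ?fin_num_measure.
Qed.

Lemma two_sum_le_of_involution {R : realFieldType} {T S : finType}
    {phi : S -> T -> T} {w p : T -> S -> R} :
  (forall s, involutive (phi s)) -> (forall t s, w (phi s t) s = w t s) ->
  (forall t s, 0 <= w t s) -> (forall t s, p t s + p (phi s t) s <= 1) ->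
  2 * \sum_t \sum_s w t s * p t s <= \sum_t \sum_s w t s.
Proof.
move=> phiK w_phi w_ge0 p_pair.
rewrite (exchange_big _ _ _ _ _ (fun t s => w t s * p t s)).
rewrite (exchange_big _ _ _ _ _ (fun t s => w t s)) /= mulr_sumr.
apply: ler_sum => s _.
rewrite mulr2n mulrDl mul1r {2}(reindex_inj (inv_inj (phiK s))) -big_split /=.
apply: ler_sum => t _; rewrite w_phi -mulrDr -[leRHS]mulr1.
by rewrite ler_wpM2l.
Qed.

Lemma sq_risk0_le (R : realType) (p q u : R) :
  0 <= p -> 0 <= q -> `|p - q| <= (p + q) / 2 -> 1 <= `|u| ->
  p + q <= p * sq_loss 1 u + q * sq_loss (-1) u.
Proof.
move=> p_ge0 q_ge0 bias u_ge1.
have uD : u * (p - q) <= `|u| * `|p - q| by rewrite -normrM ler_norm.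
have key : 0 <= `|u| * ((p + q) * `|u| - 2 * `|p - q|).
  by apply: mulr_ge0; [exact: normr_ge0 | nra].
have u2 : u * u = `|u| * `|u| by rewrite -!expr2 real_normK ?num_real.
rewrite /sq_loss !expr2; nra.
Qed.

Section RiskDecomposition.
Context {R : realType} {X : finType}.
Implicit Types (mu : X * bool -> R) (f : X -> R).

Lemma sum_marg mu : \sum_z mu z = \sum_x marg mu x.
Proof.
rewrite (eq_bigr (fun x => \sum_b mu (x, b))); last by move=> x _; rewrite big_bool.
by rewrite pair_bigA; apply: eq_bigr => -[].
Qed.

Lemma exp_lossE loss mu f : exp_loss loss mu f =
  \sum_x (mu (x, true) * loss 1 (f x) + mu (x, false) * loss (-1) (f x)).
Proof.
rewrite (eq_bigr (fun x => \sum_b mu (x, b) * loss (lab b) (f x))).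
  by rewrite pair_bigA; apply: eq_bigr => -[].
by move=> x _; rewrite big_bool.
Qed.

Lemma exp_sq_loss0 mu : exp_loss sq_loss mu (fun=> 0) = \sum_z mu z.
Proof.
by apply: eq_bigr => -[x []] _; rewrite /sq_loss /= subr0 ?sqrrN expr1n mulr1.
Qed.

Lemma cond_expE mu x :
  0 < marg mu x -> mu (x, true) - mu (x, false) = cond_exp mu x * marg mu x.
Proof.
by move=> marg_gt0; rewrite /cond_exp divfK ?gt_eqF // big_bool /= mulr1 mulrN1.
Qed.

Lemma realizable_half_bias mu : (forall z, 0 <= mu z) ->
  realizable S_half_partial mu ->
  forall x, `|mu (x, true) - mu (x, false)| <= marg mu x / 2.
Proof.
move=> mu_ge0 [s Ss s_mu] x; have mt := mu_ge0 (x, true); have mf := mu_ge0 (x, false).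
have [marg_gt0|] := ltP 0 (marg mu x); last by rewrite /marg => ?; rewrite ler_norml; lra.
have [v [sx cv]] := s_mu x marg_gt0.
rewrite cond_expE // cv normrM (gtr0_norm marg_gt0) mulrC ler_pM2l //.
by case: (Ss x); rewrite sx => -[->]; rewrite ?normrN ger0_norm ?div1r.
Qed.

Lemma exp_sq_loss0_le_sign mu b : (forall z, 0 <= mu z) ->
  realizable S_half_partial mu -> B_sign_total b ->
  exp_loss sq_loss mu (fun=> 0) <= exp_loss sq_loss mu b.
Proof.
move=> mu_ge0 mu_real Bb; rewrite exp_sq_loss0 sum_marg exp_lossE.
apply: ler_sum => x _; apply: sq_risk0_le; rewrite ?mu_ge0 //.
  exact: realizable_half_bias.
by case: (Bb x) => ->; rewrite ?normrN normr1.
Qed.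
End RiskDecomposition.

Section Learners.
Context {R : realType} {X : finType}.

Lemma succ_prob_sure n (A : @rlearner R X n) mu good : is_distr mu ->
  (forall s w, good (@rl_map R X n A s w)) -> succ_prob A mu good = 1.
Proof.
case=> _ mu1 good_all; rewrite /succ_prob.
under eq_bigr => s _.
  rewrite (_ : [set w | _] = setT); last by apply/seteqP; split=> // w _; exact: good_all.
  rewrite probability_setT mulr1.
  over.
by rewrite sum_tuple_prod mu1 expr1n.
Qed.

Lemma measurable_comp_good n (A : @rlearner R X n)
    (B : set (X -> R)) (mu : X * bool -> R) eps s :
  measurable [set w | comp_good B sq_loss eps mu (@rl_map R X n A s w)].
Proof.
rewrite -[X in measurable X]setTI; apply: measurable_fun_le => //.
apply: measurable_sum => z; apply: measurable_funM; first exact: measurable_cst.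
apply: measurable_funX; apply: measurable_funB; first exact: measurable_cst.
exact: rl_meas.
Qed.

Definition zero_learner n : @rlearner R X n.
Proof.
refine (@RLearner R X n _ R \d_(0 : R) (fun _ _ _ => 0) (fun _ _ => measurable_cst _) _).
by move=> *; rewrite lerN10 ler01.
Defined.

Lemma comp_good_zero (mu : X * bool -> R) eps : 0 <= eps -> is_distr mu ->
  realizable S_half_partial mu -> comp_good B_sign_total sq_loss eps mu (fun=> 0).
Proof.
move=> eps_ge0 [mu_ge0 _] mu_real; rewrite /comp_good -[leLHS]addr0 lerD //.
apply: lb_le_inf.
  by exists (exp_loss sq_loss mu (fun=> 1)), (fun=> 1) => // x; left.
by move=> _ [b Bb <-]; exact: exp_sq_loss0_le_sign.
Qed.

Lemma CompR_zero_learner n (eps delta : R) : 0 <= eps -> 0 <= delta ->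
  CompR S_half_partial B_sign_total sq_loss eps delta (zero_learner n).
Proof.
move=> eps_ge0 delta_ge0 mu mu_distr mu_real.
rewrite succ_prob_sure //; first by rewrite lerBlDr lerDl.
by move=> s w; exact: comp_good_zero.
Qed.
End Learners.

Section UniformLowerBound.
Context {R : realType} {X : finType}.
Hypothesis X_gt0 : (0 < #|X|)%N.
Implicit Types (t : {ffun X -> bool}) (f : X -> R).

Let card_neq0 : #|X|%:R != 0 :> R.
Proof. by rewrite pnatr_eq0 -lt0n. Qed.

Definition labeled_unif t (z : X * bool) : R :=
  if z.2 == t z.1 then 1 / #|X|%:R else 0.

Lemma marg_labeled_unif t x : marg (labeled_unif t) x = 1 / #|X|%:R.
Proof. by rewrite /marg /labeled_unif /=; case: (t x); rewrite ?addr0 ?add0r. Qed.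

Lemma labeled_unif_distr t : is_distr (labeled_unif t).
Proof.
split=> [z|]; first by rewrite /labeled_unif; case: ifP; rewrite ?divr_ge0 ?ler0n.
rewrite sum_marg (eq_bigr (fun=> 1 / #|X|%:R)) => [|x _]; last exact: marg_labeled_unif.
by rewrite sumr_const div1r -[_ *+ _]mulr_natr mulVf.
Qed.

Lemma labeled_unif_realizable t : realizable B_sign_partial (labeled_unif t).
Proof.
exists (fun x => Some (lab (t x))); first by move=> x; case: (t x); [left|right].
move=> x _; exists (lab (t x)); split=> //.
rewrite /cond_exp marg_labeled_unif big_bool /labeled_unif /=.
by case: (t x) => /=; field.
Qed.

Definition sq_err t f : R := \sum_x (lab (t x) - f x) ^+ 2.

Lemma exp_loss_labeled_unif t f :
  exp_loss sq_loss (labeled_unif t) f = sq_err t f / #|X|%:R.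
Proof.
rewrite exp_lossE /sq_err mulr_suml; apply: eq_bigr => x _.
by rewrite /labeled_unif /sq_loss /=; case: (t x) => /=; field.
Qed.

Lemma sq_err_comp_good eps t f :
  comp_good S_half_total sq_loss eps (labeled_unif t) f ->
  sq_err t f <= #|X|%:R * (1/4 + eps).
Proof.
pose half : X -> R := fun x => lab (t x) / 2.
have half_risk : exp_loss sq_loss (labeled_unif t) half = 1/4.
  rewrite exp_loss_labeled_unif /sq_err (eq_bigr (fun=> 1/4)); last first.
    by move=> x _; rewrite /half; case: (t x) => /=; field.
  by rewrite sumr_const -[_ *+ _]mulr_natr; field.
have inf_le : inf [set exp_loss sq_loss (labeled_unif t) b | b in S_half_total] <= 1/4.
  rewrite -half_risk; apply: ge_inf; last first.
    by exists half => // x; rewrite /half; case: (t x); [left|right]; rewrite /= ?mulNr.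
  exists 0 => _ [b _ <-]; apply: sumr_ge0 => z _.
  by rewrite mulr_ge0 ?sqr_ge0 ?(labeled_unif_distr t).1.
rewrite /comp_good exp_loss_labeled_unif => good.
by rewrite mulrC -ler_pdivrMr ?ltr0n // (le_trans good) ?lerD2r.
Qed.

Definition seen {n} (s : n.-tuple (X * bool)) : seq X := [seq z.1 | z <- s].

Lemma card_seenC {n} (s : n.-tuple (X * bool)) : (#|X| <= n + #|[predC seen s]|)%N.
Proof.
have := card_size (seen s); rewrite size_map size_tuple => seen_le.
by rewrite -(cardC (mem (seen s))) leq_add2r.
Qed.

Definition flip_unseen {n} (s : n.-tuple (X * bool)) t : {ffun X -> bool} :=
  [ffun x => if x \in seen s then t x else ~~ t x].

Lemma flip_unseenK {n} (s : n.-tuple (X * bool)) : involutive (flip_unseen s).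
Proof. by move=> t; apply/ffunP => x; rewrite !ffunE; case: (x \in seen s); rewrite ?negbK. Qed.

Lemma sample_weight_flip_unseen {n} (s : n.-tuple (X * bool)) t :
  \prod_(i < n) labeled_unif (flip_unseen s t) (tnth s i) =
  \prod_(i < n) labeled_unif t (tnth s i).
Proof. by apply: eq_bigr => i _; rewrite /labeled_unif ffunE map_f ?mem_tnth. Qed.

Lemma sq_err_flip_unseen {n} (s : n.-tuple (X * bool)) t f :
  2 * #|[predC seen s]|%:R <= sq_err t f + sq_err (flip_unseen s t) f.
Proof.
rewrite /sq_err -big_split mulr_natr -sumr_const big_mkcond /=.
apply: ler_sum => x _; rewrite ffunE inE /=; case: (x \in seen s) => /=.
  by rewrite addr_ge0 ?sqr_ge0.
by case: (t x) => /=; rewrite !expr2; nra.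
Qed.

Lemma not_comp_good_flip_unseen eps {n} (s : n.-tuple (X * bool)) t f :
  n%:R < (3/4 - eps) * #|X|%:R ->
  comp_good S_half_total sq_loss eps (labeled_unif t) f ->
  ~ comp_good S_half_total sq_loss eps (labeled_unif (flip_unseen s t)) f.
Proof.
move=> n_small /sq_err_comp_good good_t /sq_err_comp_good good_flip.
have := sq_err_flip_unseen s t f.
have : #|X|%:R <= n%:R + #|[predC seen s]|%:R :> R by rewrite -natrD ler_nat card_seenC.
lra.
Qed.

Lemma CompR_at_labeled_unif_sample_size eps delta n (A : @rlearner R X n) :
  delta < 1/2 ->
  CompR_at (fun=> 1 / #|X|%:R) B_sign_partial S_half_total sq_loss eps delta A ->
  (3/4 - eps) * #|X|%:R <= n%:R.
Proof.
move=> delta_lt A_learns; rewrite leNgt; apply/negP => n_small.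
pose w t (s : n.-tuple (X * bool)) := \prod_(i < n) labeled_unif t (tnth s i).
pose p t s := fine (rl_P A
  [set om | comp_good S_half_total sq_loss eps (labeled_unif t) (@rl_map R X n A s om)]).
have succ_t t : 1 - delta <= \sum_s w t s * p t s.
  exact: A_learns (labeled_unif_distr t) (marg_labeled_unif t) (labeled_unif_realizable t).
have mass_t t : \sum_s w t s = 1 by rewrite sum_tuple_prod (labeled_unif_distr t).2 expr1n.
have pair_le1 t s : p t s + p (flip_unseen s t) s <= 1.
  apply: fine_probabilityU_le1; [exact: measurable_comp_good.. |].
  apply/seteqP; split=> // om [good_t good_flip].
  exact: not_comp_good_flip_unseen n_small good_t good_flip.
have w_ge0 t s : 0 <= w t s by rewrite prodr_ge0 // => i _; rewrite (labeled_unif_distr t).1.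
have pairing := two_sum_le_of_involution (w := w) (p := p) (@flip_unseenK n)
  (fun t s => sample_weight_flip_unseen s t) w_ge0 pair_le1.
have succ_sum : \sum_(t : {ffun X -> bool}) (1 - delta) <= \sum_t \sum_s w t s * p t s.
  by apply: ler_sum => t _; exact: succ_t.
have N_gt0 : 0 < #|{ffun X -> bool}|%:R :> R.
  by rewrite ltr0n; apply/card_gt0P; exists [ffun=> true].
move: pairing succ_sum; rewrite (eq_bigr _ (fun t _ => mass_t t)) !sumr_const -mulr_natr.
nra.
Qed.
End UniformLowerBound.

Theorem lemmaC3 (R : realType) (m : nat) (X : finType) :
  (0 < m)%N -> #|X| = m ->
  (forall eps delta : R, 0 <= eps -> 0 <= delta ->
     exists A : @rlearner R X 0,
       CompR (@S_half_partial R X) (@B_sign_total R X) sq_loss eps delta A)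
  /\
  (forall eps delta : R, 0 < eps < 3/4 -> 0 < delta < 1/2 ->
     forall (n : nat) (A : @rlearner R X n),
       CompR_at (fun _ => 1 / m%:R) (@B_sign_partial R X) (@S_half_total R X)
         sq_loss eps delta A ->
       (1 - Num.sqrt (1/4 + eps)) * m%:R <= n%:R).
Proof.
move=> m_gt0 cardX; subst m; split.
  move=> eps delta eps_ge0 delta_ge0.
  by exists (zero_learner 0); exact: CompR_zero_learner.
move=> eps delta /andP[eps_gt0 eps_lt] /andP[_ delta_lt] n A A_learns.
apply: le_trans (CompR_at_labeled_unif_sample_size m_gt0 _ _ _ _ delta_lt A_learns).
rewrite ler_wpM2r ?ler0n //.
have : 1/4 + eps <= Num.sqrt (1/4 + eps) by apply: le_sqrtr_id; lra.
lra.
Qed.
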